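(* Let $A$ be a non-abelian subalgebra of the matrix metabelian Lie algebra $M_{I,\Lambda}$. Then $\mathrm{Fit}(A)=\{(f,u)\in A : f=0\}$.
   Context: For sets $I,\Lambda$ and a field $k$, let $R=k[x_\alpha:\alpha\in\Lambda]$ and $T$ the free $R$-module with basis $\{u_i:i\in I\}$. $M_{I,\Lambda}$ is the set of pairs $(f,u)$, $f\in R$, $u\in T$ (matrices $\begin{pmatrix} f&u\\0&0\end{pmatrix}$), with componentwise addition and scalar multiplication and product $(f,u)\circ(g,v)=(0,ug-vf)$; it is a metabelian Lie $k$-algebra. $\mathrm{Fit}(A)$ is the ideal of $A$ generated by all elements lying in nilpotent ideals of $A$. *)

From HB Require Import structures.
From mathcomp Require Import all_boot all_algebra.
From mathcomp.multinomials Require Import monalg.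
Set Implicit Arguments. Unset Strict Implicit. Unset Printing Implicit Defensive.
Import GRing.Theory.
Local Open Scope ring_scope.

(* R = k[x_a : a in Lam]  : monoid algebra of commutative monomials over Lam *)
Definition Rpoly (k : fieldType) (Lam : choiceType) := {malg k[{cmonom Lam}]}.
(* T = free R-module with basis {u_i : i in I} (finitely supported I -> R) *)
Definition Tmod (k : fieldType) (Lam I : choiceType) := {malg (Rpoly k Lam)[I]}.

Section MatrixMetabelian.
Variables (k : fieldType) (Lam I : choiceType).
Local Notation R := (Rpoly k Lam).
Local Notation T := (Tmod k Lam I).

(* elements (f,u) of M_{I,Lam} *)
Definition Mel := (R * T)%type.
Definition mzero : Mel := (0, 0).
Definition madd (p q : Mel) : Mel := (p.1 + q.1, p.2 + q.2).
Definition mscale (c : k) (p : Mel) : Mel := (c *: p.1, (c%:A : R) *: p.2).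
Definition mbr (p q : Mel) : Mel := (0, q.1 *: p.2 - p.1 *: q.2).

Definition subspace (W : Mel -> Prop) : Prop :=
  [/\ W mzero, (forall x y, W x -> W y -> W (madd x y))
    & (forall c x, W x -> W (mscale c x))].

Definition subalgebra (A : Mel -> Prop) : Prop :=
  subspace A /\ (forall x y, A x -> A y -> A (mbr x y)).

Definition non_abelian (A : Mel -> Prop) : Prop :=
  exists x y, [/\ A x, A y & mbr x y <> mzero].

Definition span (S : Mel -> Prop) : Mel -> Prop :=
  fun v => forall W, subspace W -> (forall x, S x -> W x) -> W v.

Definition brack (J K : Mel -> Prop) : Mel -> Prop :=
  span (fun v => exists x y, [/\ J x, K y & v = mbr x y]).

(* lower central series of J: J^1 = J, J^{n+1} = [J, J^n] *)
Fixpoint lcs (J : Mel -> Prop) (n : nat) : Mel -> Prop :=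
  match n with
  | O => J
  | S m => brack J (lcs J m)
  end.

Definition nilpotent (J : Mel -> Prop) : Prop :=
  exists n, forall v, lcs J n v -> v = mzero.

Definition ideal_of (A J : Mel -> Prop) : Prop :=
  [/\ subspace J, (forall x, J x -> A x)
    & (forall a x, A a -> J x -> J (mbr a x))].

Definition Fit (A : Mel -> Prop) : Mel -> Prop :=
  fun v => forall J, ideal_of A J ->
    (forall N x, ideal_of A N -> nilpotent N -> N x -> J x) -> J v.

End MatrixMetabelian.

From Pilot Require Import Defs.
From HB Require Import structures.
From mathcomp Require Import all_boot all_algebra finmap.
From mathcomp.multinomials Require Import mpoly monalg.
Set Implicit Arguments. Unset Strict Implicit. Unset Printing Implicit Defensive.
Import GRing.Theory.
Local Open Scope ring_scope.

(* Bracketing with [x = (f, v)] sends [(0, u)] to [(0, -f u)].  Since [k[x_a]]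
   is a domain and [T] is free, this is injective when [f != 0], so iterated
   brackets with such an [x] never vanish on a nonzero [(0, u)]; as [A] is not
   abelian, [x] produces such an element inside any ideal containing it, so
   [x] lies in no nilpotent ideal.  Conversely [{(0, u)} ∩ A] is an abelian,
   hence nilpotent, ideal. *)

Section RestrictVariables.
Variables (R : idomainType) (Lam : choiceType) (n : nat) (t : n.-tuple Lam).

(* Evaluating at the variables listed in [t] maps [R[x_a : a in Lam]] into the
   polynomial ring [R[x_1, ..., x_n]], which mpoly already knows is a domain. *)
Definition cmonom_restr (m : cmonom Lam) : mpoly.multinom n :=
  mpoly.Multinom [tuple m (tnth t i) | i < n].

Lemma cmonom_restrE m i : mpoly.fun_of_multinom (cmonom_restr m) i = m (tnth t i).
Proof. by rewrite /cmonom_restr mpoly.multinomE tnth_mktuple. Qed.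

Lemma cmonom_restr_inj (m1 m2 : cmonom Lam) :
  {subset finsupp m1 <= t} -> {subset finsupp m2 <= t} ->
  cmonom_restr m1 = cmonom_restr m2 -> m1 = m2.
Proof.
move=> sub1 sub2 eq12; apply/eqP/cmP => x.
have [xt|xNt] := boolP (x \in t).
  have x_lt : (index x t < n)%N by rewrite -{2}(size_tuple t) index_mem.
  have <- : tnth t (Ordinal x_lt) = x by rewrite (tnth_nth x) /= nth_index.
  by rewrite -!cmonom_restrE eq12.
rewrite !fsfun_dflt //; apply/negP.
  by move/sub2; rewrite (negbTE xNt).
by move/sub1; rewrite (negbTE xNt).
Qed.

Definition monom_restr (m : cmonom Lam) : mpoly.mpoly n R :=
  mpoly.mpolyX R (cmonom_restr m).

Lemma monom_restr_is_multiplicative :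
  @mmorphism (cmonom Lam : monomType) (mpoly.mpoly n R) monom_restr.
Proof.
split=> [m1 m2|]; rewrite /monom_restr.
  rewrite -mpoly.mpolyXD; congr mpoly.mpolyX.
  by apply/mpoly.mnmP => i; rewrite mpoly.mnmDE !cmonom_restrE mulcmE.
rewrite -(mpoly.mpolyX0 n R); congr mpoly.mpolyX.
by apply/mpoly.mnmP => i; rewrite mpoly.mnm0E cmonom_restrE onecmE.
Qed.

HB.instance Definition _ := isMultiplicative.Build (cmonom Lam) (mpoly.mpoly n R)
  monom_restr monom_restr_is_multiplicative.

Definition malg_restr (f : {malg R[cmonom Lam]}) : mpoly.mpoly n R :=
  mmap (mpoly.mpolyC n (R:=R)) monom_restr f.

Lemma malg_restrM f g : malg_restr (f * g) = malg_restr f * malg_restr g.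
Proof. exact: rmorphM. Qed.

Lemma mcoeff_malg_restr (f : {malg R[cmonom Lam]}) M : M \in msupp f ->
  {in msupp f, forall m, cmonom_restr m = cmonom_restr M -> m = M} ->
  mpoly.mcoeff (cmonom_restr M) (malg_restr f) = mcoeff M f.
Proof.
move=> fM inj; rewrite /malg_restr mmapE raddf_sum /=.
rewrite (bigD1_seq M) //= big1_seq ?addr0.
  by rewrite /monom_restr mpoly.mcoeffCM mpoly.mcoeffX eqxx mulr1.
move=> m /andP[mNM fm]; rewrite /monom_restr mpoly.mcoeffCM mpoly.mcoeffX.
case: eqP => [/(inj _ fm) eqmM|_]; last by rewrite mulr0.
by rewrite eqmM eqxx in mNM.
Qed.

Lemma malg_restr_neq0 (f : {malg R[cmonom Lam]}) : f != 0 ->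
  (forall m, m \in msupp f -> {subset finsupp m <= t}) -> malg_restr f != 0.
Proof.
move=> nz_f f_in_t; have /fset0Pn[M fM] : msupp f != fset0 by rewrite msupp_eq0.
have coefM : mpoly.mcoeff (cmonom_restr M) (malg_restr f) = mcoeff M f.
  by apply: mcoeff_malg_restr => // m fm; apply: cmonom_restr_inj; apply: f_in_t.
apply: contraTneq fM => restr_f0.
by rewrite -mcoeff_neq0 -coefM restr_f0 mpoly.mcoeff0 eqxx.
Qed.

End RestrictVariables.

Definition malg_vars (R : nzRingType) (Lam : choiceType) (f : {malg R[cmonom Lam]}) :
    seq Lam :=
  flatten [seq (finsupp (cmonom_val m) : seq Lam) | m <- (msupp f : seq _)].

Lemma mem_malg_vars (R : nzRingType) (Lam : choiceType) (f : {malg R[cmonom Lam]})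
    (m : cmonom Lam) :
  m \in msupp f -> {subset finsupp m <= malg_vars f}.
Proof.
move=> fm x mx; apply/flattenP.
by exists (finsupp (cmonom_val m) : seq Lam) => //; apply: map_f.
Qed.

Lemma cmalg_mulf_neq0 (R : idomainType) (Lam : choiceType) (f g : {malg R[cmonom Lam]}) :
  f != 0 -> g != 0 -> f * g != 0.
Proof.
move=> nz_f nz_g; pose t := in_tuple (malg_vars f ++ malg_vars g).
apply: contra_neq (mulf_neq0 (malg_restr_neq0 (t := t) nz_f _)
                             (malg_restr_neq0 (t := t) nz_g _)) => [fg0||].
- by rewrite -malg_restrM fg0 /malg_restr raddf0.
- by move=> m fm x /(mem_malg_vars fm) fx; rewrite mem_cat fx.
- by move=> m gm x /(mem_malg_vars gm) gx; rewrite mem_cat gx orbT.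
Qed.

Lemma cmalg_lreg (R : idomainType) (Lam : choiceType) (f : {malg R[cmonom Lam]}) :
  f != 0 -> GRing.lreg f.
Proof.
move=> nz_f g h /eqP; rewrite -subr_eq0 -mulrBr; apply: contraTeq => ngh.
by rewrite cmalg_mulf_neq0 // subr_eq0.
Qed.

Lemma lreg_malgZ_eq0 (S : nzRingType) (K : choiceType) (c : S) (w : {malg S[K]}) :
  GRing.lreg c -> c *: w = 0 -> w = 0.
Proof.
move=> reg_c cw0; apply/malgP => x; apply: reg_c.
by rewrite -mcoeffZ cw0 mcoeff0 mulr0.
Qed.

Lemma scale_jacobi (R : comPzRingType) (V : lmodType R) (f g h : R) (u v w : V) :
  h *: (g *: u - f *: v) = g *: (h *: u - f *: w) - f *: (h *: v - g *: w).
Proof.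
rewrite !scalerBr !scalerA [h * g]mulrC [h * f]mulrC [g * f]mulrC.
by rewrite opprB addrA subrK.
Qed.

Section MatrixMetabelian.
Variables (k : fieldType) (Lam I : choiceType).
Local Notation Mel := (Mel k Lam I).
Local Notation mzero := (mzero k Lam I).

Lemma Tmod_scale_eq0 (f : Rpoly k Lam) (u : Tmod k Lam I) :
  f != 0 -> f *: u = 0 -> u = 0.
Proof. by move/cmalg_lreg; apply: lreg_malgZ_eq0. Qed.

Lemma scale_mbr (a b x : Mel) :
  x.1 *: (mbr a b).2 = b.1 *: (mbr a x).2 - a.1 *: (mbr b x).2.
Proof. exact: scale_jacobi. Qed.

Lemma mbr_fst0 (x y : Mel) : x.1 = 0 -> y.1 = 0 -> mbr x y = mzero.
Proof. by rewrite /mbr => -> ->; rewrite !scale0r subrr. Qed.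

Lemma mbr_fst0r (x w : Mel) : w.1 = 0 -> mbr x w = (0, - (x.1 *: w.2)).
Proof. by rewrite /mbr => ->; rewrite scale0r sub0r. Qed.

Lemma subspace_zero : subspace (fun q : Mel => q = mzero).
Proof.
split=> [//|x y -> ->|c x ->]; congr (_, _).
- exact: addr0.
- exact: addr0.
- exact: scaler0.
- exact: scaler0.
Qed.

Lemma span_eq0 (S : Mel -> Prop) :
  (forall x, S x -> x = mzero) -> forall v, Defs.span S v -> v = mzero.
Proof. by move=> S0 v /(_ (fun q => q = mzero)); apply; [exact: subspace_zero|]. Qed.

Lemma brack_mbr (J K : Mel -> Prop) x y : J x -> K y -> brack J K (mbr x y).
Proof. by move=> Jx Ky W _; apply; exists x, y. Qed.

Lemma lcs_iter_mbr (N : Mel -> Prop) x w j :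
  N x -> N w -> lcs N j (iter j (mbr x) w).
Proof. by move=> Nx Nw; elim: j => [|j IHj] //=; apply: brack_mbr. Qed.

Lemma iter_mbr (x w : Mel) j :
  w.1 = 0 -> iter j (mbr x) w = (0, (- x.1) ^+ j *: w.2).
Proof.
case: w => w1 w2 w10; elim: j => [|j IHj]; first by rewrite expr0 scale1r -w10.
rewrite iterS IHj mbr_fst0r; last by [].
by rewrite exprS -scalerA scaleNr.
Qed.

Definition ker_fst (A : Mel -> Prop) : Mel -> Prop := fun p => A p /\ p.1 = 0.

Lemma ideal_ker_fst (A : Mel -> Prop) : subalgebra A -> ideal_of A (ker_fst A).
Proof.
move=> [[A0 AD AZ] Abr]; split=> [|x []//|a x Aa [Ax _]]; last by split; [exact: Abr|].
split=> [//|x y [Ax x1] [Ay y1]|c x [Ax x1]]; split.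
- exact: AD.
- by change (x.1 + y.1 = 0); rewrite x1 y1 addr0.
- exact: AZ.
- by change (c *: x.1 = 0); rewrite x1 scaler0.
Qed.

Lemma nilpotent_fst0 (J : Mel -> Prop) : (forall x, J x -> x.1 = 0) -> nilpotent J.
Proof.
move=> J1; exists 1%N; apply: span_eq0 => _ [x [y [Jx Jy ->]]].
by apply: mbr_fst0; apply: J1.
Qed.

Lemma nilpotent_snd_eq0 (N : Mel -> Prop) x w :
  nilpotent N -> N x -> N w -> x.1 != 0 -> w.1 = 0 -> w.2 = 0.
Proof.
move=> [n Nn] Nx Nw nz_x1 w1; have := Nn _ (lcs_iter_mbr n Nx Nw).
rewrite iter_mbr // => -[].
exact/lreg_malgZ_eq0/lregX/lregN/cmalg_lreg.
Qed.

Lemma commute_mbr_eq0 (a b x : Mel) :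
  x.1 != 0 -> (mbr a x).2 = 0 -> (mbr b x).2 = 0 -> mbr a b = mzero.
Proof.
move=> nz_x1 ax bx; have ab2 : (mbr a b).2 = 0.
  apply: (Tmod_scale_eq0 nz_x1).
  (* Unrestricted rewriting with [ax] unfolds the malg operations while
     matching and does not terminate in reasonable time. *)
  rewrite scale_mbr [X in _ *: X - _]ax [X in _ - _ *: X]bx.
  by rewrite !scaler0 subrr.
by rewrite [mbr a b]surjective_pairing [X in (_, X)]ab2.
Qed.

Lemma nilpotent_ideal_fst0 (A N : Mel -> Prop) x :
  non_abelian A -> ideal_of A N -> nilpotent N -> N x -> x.1 = 0.
Proof.
move=> [a [b [Aa Ab nab]]] [_ _ Nbr] nilN Nx; apply/eqP/negPn/negP => nz_x1.
have snd0 c : A c -> (mbr c x).2 = 0.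
  move=> Ac; exact: (nilpotent_snd_eq0 nilN Nx (Nbr _ _ Ac Nx) nz_x1 (erefl _)).
by apply/nab/(commute_mbr_eq0 nz_x1); apply: snd0.
Qed.

End MatrixMetabelian.

Theorem lemma3p1p1 (k : fieldType) (Lam I : choiceType)
    (A : Mel k Lam I -> Prop) :
  subalgebra A -> non_abelian A ->
  forall p : Mel k Lam I, Fit A p <-> (A p /\ p.1 = 0).
Proof.
move=> subA nabA p; split=> [Fit_p|ker_p J _ J_nil].
- apply: (Fit_p (ker_fst A)); first exact: ideal_ker_fst.
  move=> N x idN nilN Nx; split; first by case: idN => _ NA _; apply: NA.
  exact: nilpotent_ideal_fst0 nabA idN nilN Nx.
- apply: (J_nil (ker_fst A)) ker_p; first exact: ideal_ker_fst.
  by apply: nilpotent_fst0 => x [].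
Qed.
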